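(* Let $d\le k$ and let $R$ be a $d\times k$ matrix that is weakly completely-$\mathcal S$ with respect to $f:\{1,\dots,k\}\to\mathcal P(\{1,\dots,d\})$, where $f(j)\ne\emptyset$ for all $j$ and, for each $1\le i\le d$, $f(j)=\{i\}$ iff $j=i$. Then there is a constant $C>0$ depending only on $R$ and $f$ such that the following holds. Whenever $\delta>0$, $0\le t_1<t_2<\infty$, $w,x\in C([t_1,t_2],\mathbb R^d)$ and $y\in C([t_1,t_2],\mathbb R^k)$ satisfy (i) $w(t)=x(t)+Ry(t)$ for all $t\in[t_1,t_2]$; (ii) $w(t)\in\mathbb R^d_{\ge0}$ for all $t\in[t_1,t_2]$; (iii) for each $j$: $y_j(t_1)\ge0$, $y_j$ is nondecreasing, and $\int_{t_1}^{t_2}\mathbf 1(w_i(s)>\delta\text{ for some }i\in f(j))\,dy_j(s)=0$; then $$\mathrm{Osc}(y,[t_1,t_2])\le C\big(\mathrm{Osc}(x,[t_1,t_2])+\delta\big),\qquad \mathrm{Osc}(w,[t_1,t_2])\le C\big(\mathrm{Osc}(x,[t_1,t_2])+\delta\big).$$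
   Context: For $g\in C([t_1,t_2],\mathbb R^m)$, $\mathrm{Osc}(g,[t_1,t_2])=\sup\{\max_{1\le l\le m}|g_l(t)-g_l(s)|: t_1\le s<t\le t_2\}$. Weakly completely-$\mathcal S$: for a $d\times k$ matrix $R$ and $f:\{1,\dots,k\}\to\mathcal P(\{1,\dots,d\})$, for nonempty $I\subseteq\{1,\dots,d\}$ set $J_I=\{1\le j\le k: f(j)\subseteq I\}$ and $R_I=R_{I,J_I}$; $R$ is weakly completely-$\mathcal S$ w.r.t. $f$ if for every nonempty $I$ there is $\lambda_I\in\mathbb R^I_{>0}$ with $(\lambda_I^\top R_I)_j\ge1$ for all $j\in J_I$. *)

From HB Require Import structures.
From mathcomp Require Import all_boot all_order all_algebra.
From mathcomp Require Import all_classical all_reals all_analysis.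
Set Implicit Arguments. Unset Strict Implicit. Unset Printing Implicit Defensive.
Import Order.TTheory GRing.Theory Num.Theory.
Import numFieldNormedType.Exports.
Local Open Scope classical_set_scope.
Local Open Scope ring_scope.

Definition weakly_completely_S {R : realType} (d k : nat) (M : 'M[R]_(d, k))
  (f : 'I_k -> {set 'I_d}) : Prop :=
  forall I : {set 'I_d}, I != finset.set0 ->
    exists lam : 'I_d -> R,
      (forall i, i \in I -> 0 < lam i) /\
      (forall j : 'I_k, f j \subset I -> 1 <= \sum_(i in I) lam i * M i j).

Definition Osc {R : realType} (m : nat) (g : R -> 'I_m -> R) (t1 t2 : R) : R :=
  sup [set r | exists s t, t1 <= s /\ s < t /\ t <= t2 /\
                 r = \big[Num.max/0]_(l < m) `|g t l - g s l| ].

Definition clamp_ext {R : realType} (F : R -> R) (t1 t2 : R) : R -> R :=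
  fun s => F (Num.min (Num.max s t1) t2).

(* the Lebesgue-Stieltjes (outer) measure dF of a set A: the Caratheodory
   extension of the length F(b) - F(a) of half-open intervals ]a,b] *)
Definition stieltjes_outer {R : realType} (F : R -> R) (A : set R) : \bar R :=
  measure_extension.mu_ext (wlength F) A.

From HB Require Import structures.
From mathcomp Require Import all_boot all_order all_algebra.
From mathcomp Require Import all_classical all_reals all_analysis.
From mathcomp Require Import lra.
Set Implicit Arguments. Unset Strict Implicit. Unset Printing Implicit Defensive.
Import Order.TTheory GRing.Theory Num.Theory.
Import numFieldNormedType.Exports.
Local Open Scope classical_set_scope.
Local Open Scope ring_scope.

(* Induct on the size of a set I of faces such that, on a time interval [a, b],
   only the components y_j with f j \subset I increase.  For i in I let u be the
   last time in [a, b] with w_i <= delta (u = a if there is none).  On ]u, b]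
   face i is away from the boundary, so every y_j with i in f j is flat there:
   on [u, b] only the components with f j \subset I :\ i move, the induction
   hypothesis bounds their increments and hence w_i b - w_i u, while
   w_i u - w_i a <= delta.  Testing these bounds on w_i (i in I) against the
   vector lambda_I of the completely-S condition, (lambda_I^T R_I)_j >= 1, bounds
   the total increment of y.  For I the full set this bounds Osc y, and Osc w
   follows from w = x + R y. *)

Lemma cumulative_flat (R : realType) (F : cumulative R R) (u v : R) (S : set R) :
  u <= v -> `]u, v] `<=` S -> stieltjes_outer F S = 0%E -> F v = F u.
Proof.
move=> uv uvS S0; apply/eqP; rewrite eq_le (cumulative_is_nondecreasing F _ _ uv) andbT.
have : (measure_extension.mu_ext (wlength F) `]u, v] <= 0)%E.
  by rewrite -S0; exact: measure_extension.le_mu_ext.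
rewrite measurable_mu_extE /= ?wlength_itv_bnd ?lee_fin ?subr_le0 //.
exact: is_ocitv.
Qed.

Section ClampExt.
Variables (R : realType) (g : R -> R) (t1 t2 : R).
Hypothesis t12 : t1 <= t2.

Lemma clamp_ext_in s : t1 <= s <= t2 -> clamp_ext g t1 t2 s = g s.
Proof. by case/andP=> t1s st2; rewrite /clamp_ext (max_l t1s) (min_l st2). Qed.

Lemma clamp_ext_below s : s <= t1 -> clamp_ext g t1 t2 s = g t1.
Proof. by move=> st1; rewrite /clamp_ext (max_r st1) (min_l t12). Qed.

Lemma clamp_ext_above s : t2 <= s -> clamp_ext g t1 t2 s = g t2.
Proof.
by move=> t2s; rewrite /clamp_ext (max_l (le_trans t12 t2s)) (min_r t2s).
Qed.

Hypothesis g_nd : forall s t, t1 <= s -> s <= t -> t <= t2 -> g s <= g t.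
Hypothesis g_cont : {within `[t1, t2], continuous g}.

Lemma clamp_ext_nondecreasing : nondecreasing (clamp_ext g t1 t2).
Proof.
have clamp_in s : t1 <= Num.min (Num.max s t1) t2 <= t2.
  by rewrite le_min le_max lexx orbT t12 ge_min lexx orbT.
move=> s t st; have /andP[? ?] := clamp_in s; have /andP[? ?] := clamp_in t.
by apply: g_nd => //; apply: le_min2 => //; exact: le_max2.
Qed.

Lemma clamp_ext_right_continuous : right_continuous (clamp_ext g t1 t2).
Proof.
move=> s; apply/cvgrPdist_lt => e e0; rewrite near_withinE.
have [st1|t1s] := ltP s t1.
  apply: filterS (lt_nbhsl st1) => t tt1 _.
  by rewrite !clamp_ext_below ?(ltW st1) ?(ltW tt1) // subrr normr0.
have [st2|t2s] := ltP s t2; last first.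
  apply: nearW => t st.
  by rewrite !clamp_ext_above // ?(le_trans t2s (ltW st)) // subrr normr0.
have s_in : `[t1, t2]%classic s by rewrite /= in_itv /= t1s (ltW st2).
have := (subspace_continuousP _ _).1 g_cont s s_in.
move=> /cvgrPdist_lt /(_ e e0); rewrite near_withinE => near_g.
apply: filterS2 near_g (lt_nbhsl st2) => t g_t tt2 st.
have t_in : t1 <= t <= t2 by rewrite (le_trans t1s (ltW st)) (ltW tt2).
rewrite !clamp_ext_in ?t1s ?(ltW st2) //; apply: g_t.
by rewrite /= in_itv.
Qed.

Let G := clamp_ext g t1 t2.
#[local] HB.instance Definition _ :=
  isCumulative.Build R _ R G clamp_ext_nondecreasing clamp_ext_right_continuous.

Lemma clamp_ext_flat (u v : R) (S : set R) : t1 <= u -> u <= v -> v <= t2 ->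
  `]u, v] `<=` S -> stieltjes_outer (clamp_ext g t1 t2) S = 0%E -> g v = g u.
Proof.
move=> t1u uv vt2 uvS S0.
rewrite -clamp_ext_in ?vt2 ?(le_trans t1u uv) //.
rewrite -[g u]clamp_ext_in ?t1u ?(le_trans uv vt2) //.
exact: (@cumulative_flat R G u v S uv uvS S0).
Qed.
End ClampExt.

Lemma finite_ub {R : realDomainType} {T : finType} (F : T -> R) :
  exists2 B, 0 <= B & forall t, F t <= B.
Proof.
exists (\big[Num.max/0]_t F t); first exact: bigmax_ge_id.
by move=> t; exact: le_bigmax.
Qed.

Lemma continuous_itv_osc_bounded {R : realType} (g : R -> R) (a b : R) :
  a <= b -> {within `[a, b], continuous g} ->
  exists B, forall s t, a <= s <= b -> a <= t <= b -> `|g t - g s| <= B.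
Proof.
move=> ab g_cont; have [cM _ g_le] := EVT_max ab g_cont.
have [cm _ g_ge] := EVT_min ab g_cont.
exists (g cM - g cm) => s t s_in t_in.
move: (g_le s) (g_le t) (g_ge s) (g_ge t); rewrite !in_itv /= s_in t_in.
by move=> /(_ isT) ? /(_ isT) ? /(_ isT) ? /(_ isT) ?; rewrite ler_norml; lra.
Qed.

Lemma last_time_below {R : realType} (g : R -> R) (a b c : R) :
  a <= b -> {within `[a, b], continuous g} ->
  exists2 u, a <= u <= b &
    (u = a \/ g u <= c) /\ forall s, u < s <= b -> c < g s.
Proof.
move=> ab g_cont.
pose E := [set t | a <= t <= b /\ g t <= c].
have [[t0 E_t0]|E0] := pselect (exists t, E t); last first.
  exists a; rewrite ?lexx ?ab //; split; first by left.
  move=> s /andP[a_s sb]; rewrite ltNge; apply/negP => gs; apply: E0.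
  by exists s; rewrite /E /= (ltW a_s) sb.
have E_ub : has_ubound E by exists b => t [/andP[_ ->]].
have supE : has_sup E by split; [exists t0 |].
have a_le : a <= sup E.
  by case: (E_t0) => /andP[at0 _] _; exact: le_trans at0 (ub_le_sup E_ub E_t0).
have le_b : sup E <= b by apply: ge_sup; [exists t0 | move=> t [/andP[_ ->]]].
exists (sup E); rewrite ?a_le ?le_b //; split; last first.
  move=> s /andP[Es sb]; rewrite ltNge; apply/negP => gs.
  have s_in : a <= s <= b by rewrite (ltW (le_lt_trans a_le Es)) sb.
  by have := ub_le_sup E_ub (conj s_in gs); rewrite leNgt Es.
right; rewrite leNgt; apply/negP => c_lt.
have sup_in : `[a, b]%classic (sup E) by rewrite /= in_itv /= a_le le_b.
have := (subspace_continuousP _ _).1 g_cont (sup E) sup_in.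
move=> /cvgrPdist_lt /(_ (g (sup E) - c)); rewrite subr_gt0 => /(_ c_lt).
rewrite near_withinE => /nbhs_normP [eta /= eta0 near_g].
have [t [t_in gt] sup_lt] := sup_adherent eta0 supE.
have t_le := ub_le_sup E_ub (conj t_in gt).
have t_in' : `[a, b]%classic t by rewrite /= in_itv.
have t_near : ball_ Num.Def.normr (sup E) eta t.
  by rewrite /ball_ /= ger0_norm ?subr_ge0 //; lra.
have := near_g t t_near t_in'.
by rewrite /from_subspace /= ltr_norml => /andP[_]; lra.
Qed.

Section Oscillation.
Variables (R : realType) (m : nat) (g : R -> 'I_m -> R) (t1 t2 : R).
Hypothesis t12 : t1 < t2.

Let osc_set := [set r | exists s t, t1 <= s /\ s < t /\ t <= t2 /\
                 r = \big[Num.max/0]_(l < m) `|g t l - g s l| ].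

Let osc_set_t12 : osc_set (\big[Num.max/0]_(l < m) `|g t2 l - g t1 l|).
Proof. by exists t1, t2; rewrite lexx. Qed.

Lemma Osc_le (c : R) : 0 <= c ->
  (forall s t l, t1 <= s -> s < t -> t <= t2 -> `|g t l - g s l| <= c) ->
  Osc g t1 t2 <= c.
Proof.
move=> c0 g_le; apply: ge_sup; first exact: ex_intro _ _ osc_set_t12.
by move=> r [s [t [? [? [? ->]]]]]; apply: bigmax_le => // l _; exact: g_le.
Qed.

Hypothesis g_cont : forall l, {within `[t1, t2], continuous (fun t => g t l)}.

Let osc_set_ubound : has_ubound osc_set.
Proof.
have /choice[B g_B] := fun l =>
  continuous_itv_osc_bounded (ltW t12) (@g_cont l).
have [B' B'0 B_le] := finite_ub B.
exists B' => _ [s [t [t1s [st [tt2 ->]]]]]; apply: bigmax_le => // l _.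
by apply: le_trans (B_le l); apply: g_B; lra.
Qed.

Lemma Osc_ge0 : 0 <= Osc g t1 t2.
Proof.
apply: le_trans (ub_le_sup osc_set_ubound osc_set_t12).
exact: bigmax_ge_id.
Qed.

Let le_Osc_lt s t l : t1 <= s -> s < t -> t <= t2 ->
  `|g t l - g s l| <= Osc g t1 t2.
Proof.
move=> t1s st tt2; apply: le_trans (le_bigmax _ (fun l => `|g t l - g s l|) l) _.
by apply: (ub_le_sup osc_set_ubound); exists s, t.
Qed.

Lemma le_Osc s t l : t1 <= s <= t2 -> t1 <= t <= t2 ->
  `|g t l - g s l| <= Osc g t1 t2.
Proof.
move=> /andP[t1s st2] /andP[t1t tt2].
have [st|ts|<-] := ltgtP s t; last by rewrite subrr normr0 Osc_ge0.
- exact: le_Osc_lt.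
- by rewrite distrC; exact: le_Osc_lt.
Qed.
End Oscillation.

(* C_(n+1) = Lam * (3 + N * C_n): a bound (2 + N * C_n) * eps on the increment
   of w_i, one more eps for that of x_i, weighted by lambda_I. *)
Fixpoint osc_const {R : realType} (Lam N : R) (n : nat) : R :=
  if n is n'.+1 then Lam * (3 + N * osc_const Lam N n') else 0.

Lemma osc_const_ge0 {R : realType} (Lam N : R) n :
  0 <= Lam -> 0 <= N -> 0 <= osc_const Lam N n.
Proof.
move=> Lam0 N0; elim: n => [|n IH] //=.
by rewrite mulr_ge0 // addr_ge0 // mulr_ge0.
Qed.

Lemma weakly_completely_S_choice {R : realType} d k (M : 'M[R]_(d, k)) f :
  weakly_completely_S M f ->
  exists lam : {set 'I_d} -> 'I_d -> R, forall I, I != finset.set0 ->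
    (forall i, i \in I -> 0 < lam I i) /\
    (forall j, f j \subset I -> 1 <= \sum_(i in I) lam I i * M i j).
Proof.
move=> wcS.
have /choice[lam lam_spec] : forall I, exists lamI : 'I_d -> R, I != finset.set0 ->
    (forall i, i \in I -> 0 < lamI i) /\
    (forall j, f j \subset I -> 1 <= \sum_(i in I) lamI i * M i j).
  move=> I; have [/wcS[lamI ?]|_] := boolP (I != finset.set0); first by exists lamI.
  by exists (fun=> 0).
by exists lam.
Qed.

Section ReflectionBound.
Variables (R : realType) (d k : nat) (M : 'M[R]_(d, k)) (f : 'I_k -> {set 'I_d}).
Variables (lam : {set 'I_d} -> 'I_d -> R) (Lam N : R).
Hypothesis lam_spec : forall I, I != finset.set0 ->
  (forall i, i \in I -> 0 < lam I i) /\
  (forall j, f j \subset I -> 1 <= \sum_(i in I) lam I i * M i j).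
Hypothesis Lam_ge0 : 0 <= Lam.
Hypothesis lam_le : forall I : {set 'I_d}, \sum_(i in I) lam I i <= Lam.
Hypothesis N_ge0 : 0 <= N.
Hypothesis M_le : forall i j, `|M i j| <= N.
Hypothesis f_neq0 : forall j, f j != finset.set0.

Variables (delta t1 t2 : R) (w x : R -> 'I_d -> R) (y : R -> 'I_k -> R).
Hypothesis delta_gt0 : 0 < delta.
Hypothesis t12 : t1 < t2.
Hypothesis w_cont : forall i, {within `[t1, t2], continuous (fun t => w t i)}.
Hypothesis x_cont : forall i, {within `[t1, t2], continuous (fun t => x t i)}.
Hypothesis y_cont : forall j, {within `[t1, t2], continuous (fun t => y t j)}.
Hypothesis w_eq : forall t, t1 <= t <= t2 ->
  forall i, w t i = x t i + \sum_(j < k) M i j * y t j.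
Hypothesis w_ge0 : forall t, t1 <= t <= t2 -> forall i, 0 <= w t i.
Hypothesis y_nd : forall j s t, t1 <= s -> s <= t -> t <= t2 -> y s j <= y t j.
Hypothesis y_null : forall j,
  stieltjes_outer (clamp_ext (fun s => y s j) t1 t2)
    [set s | t1 <= s <= t2 /\ exists i, i \in f j /\ delta < w s i] = 0%E.

Let eps := Osc x t1 t2 + delta.

Let eps_ge0 : 0 <= eps.
Proof. by rewrite addr_ge0 ?(Osc_ge0 t12 x_cont) ?ltW. Qed.

Let x_increment_le a b i : t1 <= a -> a <= b -> b <= t2 -> `|x b i - x a i| <= eps.
Proof.
move=> t1a ab bt2; rewrite /eps -[`|_|]addr0; apply: lerD; last exact: ltW.
by apply: le_Osc => //; apply/andP; split => //; lra.
Qed.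

Lemma y_flat j u v : t1 <= u -> u <= v -> v <= t2 ->
  (forall s, u < s <= v -> exists2 i, i \in f j & delta < w s i) -> y v j = y u j.
Proof.
move=> t1u uv vt2 high.
apply: (clamp_ext_flat (ltW t12) _ (@y_cont j) t1u uv vt2 _ (y_null j)).
  by move=> s t ? ? ?; exact: y_nd.
move=> s /=; rewrite in_itv /= => /andP[us sv]; split; first lra.
by have [|i ? ?] := high s; [rewrite us sv | exists i].
Qed.

Lemma w_increment a b i : t1 <= a -> a <= b -> b <= t2 ->
  w b i - w a i = (x b i - x a i) + \sum_j M i j * (y b j - y a j).
Proof.
move=> t1a ab bt2.
rewrite !w_eq ?t1a ?bt2 ?(le_trans t1a ab) ?(le_trans ab bt2) //.
under [in RHS]eq_bigr do rewrite mulrBr.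
by rewrite sumrB; lra.
Qed.

Lemma norm_M_y_increment_le i a b : t1 <= a -> a <= b -> b <= t2 ->
  `|\sum_j M i j * (y b j - y a j)| <= N * \sum_j (y b j - y a j).
Proof.
move=> t1a ab bt2; rewrite mulr_sumr; apply: le_trans (ler_norm_sum _ _ _) _.
apply: ler_sum => j _; have Dy0 : 0 <= y b j - y a j by rewrite subr_ge0 y_nd.
by rewrite normrM (ger0_norm Dy0) ler_wpM2r.
Qed.

Let moves_within (I : {set 'I_d}) a b :=
  forall j, ~~ (f j \subset I) -> y b j = y a j.

Let sum_bound n := forall I : {set 'I_d}, #|I| = n ->
  forall a b, t1 <= a -> a <= b -> b <= t2 -> moves_within I a b ->
  \sum_j (y b j - y a j) <= osc_const Lam N n * eps.

Lemma moves_within_high_tail (I : {set 'I_d}) i a u b : i \in I ->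
  t1 <= a -> a <= u -> u <= b -> b <= t2 ->
  (forall s, u < s <= b -> delta < w s i) ->
  moves_within I a b -> moves_within (I :\ i) u b.
Proof.
move=> iI t1a au ub bt2 high moves j fj_notin.
have [fjI|fj_notI] := boolP (f j \subset I); last first.
  apply/eqP; rewrite eq_le (y_nd _ (le_trans t1a au) ub bt2) andbT.
  by rewrite moves // y_nd // (le_trans ub bt2).
apply: y_flat => //; first exact: le_trans au.
move=> s s_in; exists i; last exact: high.
apply: contraR fj_notin => i_notin; apply/fintype.subsetP => l l_in.
by rewrite in_setD1 (fintype.subsetP fjI) // andbT; apply: contraNneq i_notin => <-.
Qed.

Lemma w_increment_le n (I : {set 'I_d}) i a b : sum_bound n -> #|I| = n.+1 ->
  i \in I -> t1 <= a -> a <= b -> b <= t2 -> moves_within I a b ->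
  w b i - w a i <= (2 + N * osc_const Lam N n) * eps.
Proof.
move=> IH cardI iI t1a ab bt2 moves.
have w_cont_ab : {within `[a, b], continuous (fun t => w t i)}.
  apply: continuous_subspaceW (@w_cont i) => s /=; rewrite !in_itv /=.
  by move=> /andP[? ?]; apply/andP; split; lra.
have [u /andP[au ub] [u_low high]] := last_time_below delta ab w_cont_ab.
have t1u : t1 <= u := le_trans t1a au.
have tail : \sum_j (y b j - y u j) <= osc_const Lam N n * eps.
  apply: (IH (I :\ i)) => //; last exact: moves_within_high_tail moves.
  by move: cardI; rewrite (cardsD1 i) iI add1n => -[].
have head : w u i - w a i <= eps.
  have wa0 : 0 <= w a i by rewrite w_ge0 // t1a (le_trans ab bt2).
  have delta_le : delta <= eps by rewrite /eps lerDr (Osc_ge0 t12 x_cont).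
  by case: u_low => [->|wu]; [rewrite subrr | lra].
have : w b i - w u i <= eps + N * (osc_const Lam N n * eps).
  rewrite w_increment //; apply: lerD.
    exact: le_trans (ler_norm _) (x_increment_le i t1u ub bt2).
  apply: le_trans (ler_norm _) _.
  exact: le_trans (norm_M_y_increment_le i t1u ub bt2) (ler_wpM2l N_ge0 tail).
by rewrite mulrDl mulrA; lra.
Qed.

Lemma sum_y_increment_le_lam (I : {set 'I_d}) a b : I != finset.set0 ->
  t1 <= a -> a <= b -> b <= t2 -> moves_within I a b ->
  \sum_j (y b j - y a j) <= \sum_(i in I) lam I i * \sum_j M i j * (y b j - y a j).
Proof.
move=> I_neq0 t1a ab bt2 moves; have [_ lam_cover] := lam_spec I_neq0.
under [X in _ <= X]eq_bigr do rewrite mulr_sumr; rewrite exchange_big /=.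
apply: ler_sum => j _; have Dy0 : 0 <= y b j - y a j by rewrite subr_ge0 y_nd.
under eq_bigr do rewrite mulrA; rewrite -mulr_suml.
have [fjI|fj_notI] := boolP (f j \subset I); first exact: ler_peMl (lam_cover j fjI).
by rewrite moves // subrr mulr0.
Qed.

Lemma sum_y_increment_le n : sum_bound n.
Proof.
elim: n => [|n IH] I cardI a b t1a ab bt2 moves.
  have I0 : I = finset.set0 by apply/eqP; rewrite -cards_eq0 cardI.
  rewrite mul0r big1 // => j _.
  by rewrite moves ?subrr // I0 finset.subset0 f_neq0.
have I_neq0 : I != finset.set0 by rewrite -card_gt0 cardI.
have [lam_pos _] := lam_spec I_neq0.
pose K := (3 + N * osc_const Lam N n) * eps.
have My_le i : i \in I -> \sum_j M i j * (y b j - y a j) <= K.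
  move=> iI; have := w_increment_le IH cardI iI t1a ab bt2 moves.
  have := x_increment_le i t1a ab bt2; rewrite w_increment // ler_norml.
  by move=> /andP[? ?]; rewrite /K !mulrDl; lra.
apply: le_trans (sum_y_increment_le_lam I_neq0 t1a ab bt2 moves) _.
apply: (@le_trans _ _ (\sum_(i in I) lam I i * K)).
  by apply: ler_sum => i iI; rewrite ler_wpM2l ?My_le ?ltW ?lam_pos.
rewrite -mulr_suml /= -mulrA; apply: ler_wpM2r (lam_le I).
by rewrite mulr_ge0 // addr_ge0 // mulr_ge0 // osc_const_ge0.
Qed.

Lemma total_y_increment_le a b : t1 <= a -> a <= b -> b <= t2 ->
  \sum_j (y b j - y a j) <= osc_const Lam N d * eps.
Proof.
move=> t1a ab bt2; apply: (@sum_y_increment_le d (finset.setT : {set 'I_d})) => //.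
  by rewrite cardsT card_ord.
by move=> j; rewrite finset.subsetT.
Qed.

Lemma Osc_y_le : Osc y t1 t2 <= osc_const Lam N d * eps.
Proof.
apply: Osc_le => // [|s t j t1s st tt2]; first by rewrite mulr_ge0 ?osc_const_ge0.
rewrite ger0_norm; last by rewrite subr_ge0 y_nd // ltW.
apply: le_trans _ (total_y_increment_le t1s (ltW st) tt2).
rewrite (bigD1 j) //= lerDl sumr_ge0 // => l _.
by rewrite subr_ge0 y_nd // ltW.
Qed.

Lemma Osc_w_le : Osc w t1 t2 <= (1 + N * osc_const Lam N d) * eps.
Proof.
apply: Osc_le => // [|s t i t1s st tt2].
  by rewrite mulr_ge0 // addr_ge0 // mulr_ge0 // osc_const_ge0.
rewrite w_increment // ?(ltW st) //; apply: le_trans (ler_normD _ _) _.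
rewrite mulrDl mul1r -mulrA; apply: lerD; first exact: x_increment_le (ltW st) tt2.
apply: le_trans (norm_M_y_increment_le i t1s (ltW st) tt2) _.
by apply: ler_wpM2l => //; apply: total_y_increment_le => //; exact: ltW.
Qed.

Lemma Osc_reflection_le (C := osc_const Lam N d) :
  Osc y t1 t2 <= (1 + C + N * C) * eps /\ Osc w t1 t2 <= (1 + C + N * C) * eps.
Proof.
have C_ge0 : 0 <= osc_const Lam N d by exact: osc_const_ge0.
have := mulr_ge0 N_ge0 C_ge0; rewrite /C => NC_ge0.
split; [apply: le_trans Osc_y_le _ | apply: le_trans Osc_w_le _];
  by rewrite ler_wpM2r //; lra.
Qed.
End ReflectionBound.

Theorem proposition7p1 (R : realType) (d k : nat) (M : 'M[R]_(d, k))
  (f : 'I_k -> {set 'I_d}) :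
  (d <= k)%N ->
  weakly_completely_S M f ->
  (forall j : 'I_k, f j != finset.set0) ->
  (forall (i : 'I_d) (j : 'I_k), f j = finset.set1 i <-> val j = val i) ->
  exists C : R, 0 < C /\
    forall (delta t1 t2 : R) (w x : R -> 'I_d -> R) (y : R -> 'I_k -> R),
      0 < delta -> 0 <= t1 -> t1 < t2 ->
      (forall i, {within `[t1, t2], continuous (fun t : R => (w t i : R))}) ->
      (forall i, {within `[t1, t2], continuous (fun t : R => (x t i : R))}) ->
      (forall j, {within `[t1, t2], continuous (fun t : R => (y t j : R))}) ->
      (forall t, t1 <= t <= t2 -> forall i, w t i = x t i + \sum_(j < k) M i j * y t j) ->
      (forall t, t1 <= t <= t2 -> forall i, 0 <= w t i) ->
      (forall j, 0 <= y t1 j /\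
         (forall s t, t1 <= s -> s <= t -> t <= t2 -> y s j <= y t j) /\
         stieltjes_outer (clamp_ext (fun s => y s j) t1 t2)
           [set s | t1 <= s <= t2 /\ exists i, i \in f j /\ delta < w s i] = 0%E) ->
      Osc y t1 t2 <= C * (Osc x t1 t2 + delta) /\
      Osc w t1 t2 <= C * (Osc x t1 t2 + delta).
Proof.
(* Neither d <= k nor the description of the singleton faces is needed. *)
move=> _ /weakly_completely_S_choice[lam lam_spec] f_neq0 _.
have [Lam Lam_ge0 lam_le] := finite_ub (fun I : {set 'I_d} => \sum_(i in I) lam I i).
have [N N_ge0 M_le] := finite_ub (fun ij : 'I_d * 'I_k => `|M ij.1 ij.2|).
pose C := osc_const Lam N d.
have C_ge0 : 0 <= C by exact: osc_const_ge0.
have NC_ge0 : 0 <= N * C by exact: mulr_ge0.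
exists (1 + C + N * C); split; first lra.
move=> delta t1 t2 w x y delta_gt0 _ t12 w_cont x_cont y_cont w_eq w_ge0 y_spec.
exact: (Osc_reflection_le lam_spec Lam_ge0 lam_le N_ge0 (fun i j => M_le (i, j))
  f_neq0 delta_gt0 t12 w_cont x_cont y_cont w_eq w_ge0
  (fun j => (y_spec j).2.1) (fun j => (y_spec j).2.2)).
Qed.
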